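(* Let $A,B,C$ be projective cameras with distinct centers, and let $\pi$ be a correspondence of one of the types PLL, LLL, PPL, PLP, PPP for $(A,B,C)$. Assume $\pi$ avoids epipoles, i.e. every image point of $\pi$ in the view of camera $i$ is different from both epipoles in view $i$, and every image line of $\pi$ in view $i$ contains neither epipole in view $i$. If $\pi$ lies in the corresponding multi-view variety $X^{\ast}_{A,B,C}$, then $\pi$ is consistent with $(A,B,C)$.
   Context: A projective camera is a full-rank matrix in $\mathbb{C}^{3\times4}$ up to scalar with center its kernel in $\mathbb{P}^3$; $\alpha,\beta,\gamma$ denote the projections given by $A,B,C$. Epipoles: $e_{1\leftarrow2}=\alpha(\ker B)$, $e_{1\leftarrow3}=\alpha(\ker C)$ in view 1; $e_{2\leftarrow1}=\beta(\ker A)$, $e_{2\leftarrow3}=\beta(\ker C)$ in view 2; $e_{3\leftarrow1}=\gamma(\ker A)$, $e_{3\leftarrow2}=\gamma(\ker B)$ in view 3. Types: PLL $\in\mathbb{P}^2\times(\mathbb{P}^2)^\vee\times(\mathbb{P}^2)^\vee$, LLL $\in((\mathbb{P}^2)^\vee)^3$, PPL $\in\mathbb{P}^2\times\mathbb{P}^2\times(\mathbb{P}^2)^\vee$, PLP $\in\mathbb{P}^2\times(\mathbb{P}^2)^\vee\times\mathbb{P}^2$, PPP $\in(\mathbb{P}^2)^3$. With $\mathcal{F\ell}_{0,1}=\{(X,L): X\in L\}\subset\mathbb{P}^3\times\mathrm{Gr}(\mathbb{P}^1,\mathbb{P}^3)$, the multi-view variety of each type is the Zariski closure of the image of the rational map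 sending $(X,L)\in\mathcal{F\ell}_{0,1}$ (or $L$ for LLL, $X$ for PPP) to the triple whose $i$-th entry is the image of $X$ under camera $i$ if the $i$-th factor is a point and the image of $L$ if it is a line. $(A,B,C)$ is consistent with $\pi$ if there exist $X\in\mathbb{P}^3$ and a line $L\ni X$ such that each camera maps $X$ (resp. $L$) exactly to the given image point (resp. image line) in its factor, these images being defined. *)

(* The base field is C = R[i] = complex R for an
   arbitrary R : realType (every realType is a model of the real numbers,
   so R[i] is the field of complex numbers). *)
From HB Require Import structures.
From mathcomp Require Import all_boot all_order all_algebra.
From mathcomp Require Import reals.
From mathcomp Require Import complex.
From mathcomp Require Import mpoly.

Set Implicit Arguments.
Unset Strict Implicit.
Unset Printing Implicit Defensive.

Import Order.TTheory GRing.Theory Num.Theory.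
Local Open Scope ring_scope.

Section ProjDefs.
Variable K : fieldType.

Definition pt_eq (n : nat) (x y : 'cV[K]_n) : Prop :=
  exists k : K, k != 0 /\ x = k *: y.

(* A line of P^3 is represented by a rank-2 matrix L whose two columns
   span it; the point X (a nonzero vector of K^4) lies on L iff X is in the
   column span of L. *)
Definition on_line (L : 'M[K]_(4,2)) (X : 'cV[K]_4) : Prop :=
  exists v : 'cV[K]_2, X = L *m v.

Definition img_pt (P : 'M[K]_(3,4)) (X : 'cV[K]_4) (x : 'cV[K]_3) : Prop :=
  P *m X != 0 /\ pt_eq (P *m X) x.

(* The image of the line L under camera P is defined (it is a line, i.e.
   L does not pass through the center) and equals the image line with dual
   coordinates l (the line {y | l^T y = 0} of P^2). *)
Definition img_line (P : 'M[K]_(3,4)) (L : 'M[K]_(4,2)) (l : 'cV[K]_3) : Prop :=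
  \rank (P *m L) = 2%N /\ l != 0 /\ l^T *m (P *m L) = 0.

End ProjDefs.

Inductive factor_kind := Pt | Ln.

Inductive corr_type := PLL | LLL | PPL | PLP | PPP.

Definition kinds (t : corr_type) : factor_kind * factor_kind * factor_kind :=
  match t with
  | PLL => (Pt, Ln, Ln)
  | LLL => (Ln, Ln, Ln)
  | PPL => (Pt, Pt, Ln)
  | PLP => (Pt, Ln, Pt)
  | PPP => (Pt, Pt, Pt)
  end.

Section MultiView.
Variable K : fieldType.

Definition maps_to (f : factor_kind) (P : 'M[K]_(3,4)) (X : 'cV[K]_4)
    (L : 'M[K]_(4,2)) (x : 'cV[K]_3) : Prop :=
  match f with
  | Pt => img_pt P X x
  | Ln => img_line P L x
  end.

Definition consistent (t : corr_type) (A B C : 'M[K]_(3,4))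
    (x1 x2 x3 : 'cV[K]_3) : Prop :=
  let: (f1, f2, f3) := kinds t in
  exists (X : 'cV[K]_4) (L : 'M[K]_(4,2)),
    [/\ X != 0, \rank L = 2%N & on_line L X] /\
    [/\ maps_to f1 A X L x1, maps_to f2 B X L x2 & maps_to f3 C X L x3].

Definition coords (x1 x2 x3 : 'cV[K]_3) (i : 'I_9) : K :=
  let j : 'I_3 := inord (i %% 3) in
  if (i < 3)%N then x1 j 0 else if (i < 6)%N then x2 j 0 else x3 j 0.

(* The multi-view variety: Zariski closure (in the product of three
   projective planes / dual planes) of the image set, i.e. the set of
   triples of nonzero vectors on which every polynomial vanishing on (the
   affine cone over) the image also vanishes. *)
Definition multiview_variety (t : corr_type) (A B C : 'M[K]_(3,4))
    (x1 x2 x3 : 'cV[K]_3) : Prop :=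
  [/\ x1 != 0, x2 != 0 & x3 != 0] /\
  forall p : {mpoly K[9]},
    (forall y1 y2 y3 : 'cV[K]_3, consistent t A B C y1 y2 y3 ->
       p.@[coords y1 y2 y3] = 0) ->
    p.@[coords x1 x2 x3] = 0.

Definition avoids (f : factor_kind) (x e : 'cV[K]_3) : Prop :=
  match f with
  | Pt => ~ pt_eq x e
  | Ln => x^T *m e != 0
  end.

Definition avoids_epipoles (t : corr_type) (A B C : 'M[K]_(3,4))
    (cA cB cC : 'cV[K]_4) (x1 x2 x3 : 'cV[K]_3) : Prop :=
  let: (f1, f2, f3) := kinds t in
  [/\ avoids f1 x1 (A *m cB) /\ avoids f1 x1 (A *m cC),
      avoids f2 x2 (B *m cA) /\ avoids f2 x2 (B *m cC) &
      avoids f3 x3 (C *m cA) /\ avoids f3 x3 (C *m cB)].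

Definition is_center (P : 'M[K]_(3,4)) (c : 'cV[K]_4) : Prop :=
  c != 0 /\ P *m c = 0.

End MultiView.

(* Stack, view by view, the cross-product matrix [y]_x of an image point y or
   the row y^T of an image line y, times the camera: the resulting 9 x 4 matrix
   N(y1, y2, y3) kills the point X of any consistent configuration, and for LLL
   the whole line L.  These are rank conditions, cut out by minors that are
   polynomial in the coordinates, so they persist on the Zariski closure.  For
   a correspondence in the closure pick X (for LLL a whole line) in the kernel
   of N.  Avoiding the epipoles makes X differ from every center, so each point
   entry is the image of X, and provides for each line entry a plane through
   the chosen line missing that center, so its image is a line. *)

From mathcomp Require Import all_boot all_order all_algebra.
From mathcomp Require Import reals complex mpoly.
From mathcomp Require Import ring zify.
Import GRing.Theory.
Local Open Scope ring_scope.

Set Implicit Arguments.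
Unset Strict Implicit.
Unset Printing Implicit Defensive.

Section KernelRank.
Variable K : fieldType.

Lemma mxrank_ltP m n (M : 'M[K]_(m, n)) :
  reflect (exists2 v : 'cV_n, v != 0 & M *m v = 0) (\rank M < n)%N.
Proof.
apply: (iffP idP) => [lt_rM_n | [v v0 Mv]].
  have : kermx M^T != 0 by rewrite -mxrank_eq0 mxrank_ker mxrank_tr subn_eq0 -ltnNge.
  case/rowV0Pn => u /sub_kermxP uM u0; exists u^T; first by rewrite trmx_eq0.
  by rewrite -[M]trmxK -trmx_mul uM trmx0.
rewrite ltnNge -mxrank_tr row_leq_rank; apply: contra v0 => /row_free_inj inj_M.
by rewrite -trmx_eq0; apply/eqP/inj_M; rewrite /= mul0mx -trmx_mul Mv trmx0.
Qed.

Lemma row_full_ker m n (M : 'M[K]_(m, n)) :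
  reflect (forall v : 'cV_n, M *m v = 0 -> v = 0) (row_full M).
Proof.
apply: (iffP idP) => [/row_fullP [N NM] v Mv | ker0].
  by rewrite -[v]mul1mx -NM -mulmxA Mv mulmx0.
rewrite /row_full eqn_leq rank_leq_col leqNgt; apply/mxrank_ltP => -[v v0 /ker0 v_eq0].
by rewrite v_eq0 eqxx in v0.
Qed.

Lemma mxrank_lt_det m n (M : 'M[K]_(m, n)) :
  (\rank M < n)%N <-> forall Q : 'M_(n, m), \det (Q *m M) = 0.
Proof.
split => [lt_rM_n Q | det0].
  apply/eqP; apply: contraTT lt_rM_n => det_neq0; rewrite -leqNgt.
  have : Q *m M \in unitmx by rewrite unitmxE unitfE.
  rewrite -row_free_unit -row_leq_rank => rQM.
  exact: leq_trans rQM (mxrankM_maxr Q M).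
rewrite ltn_neqAle rank_leq_col andbT; apply/negP => /row_fullP [Q QM].
by move: (det0 Q); rewrite QM det1 => /eqP; rewrite oner_eq0.
Qed.

Lemma corank1_ker n m (M : 'M[K]_(m, n.+1)) (c w : 'cV_n.+1) :
  \rank M = n -> c != 0 -> M *m c = 0 -> M *m w = 0 -> exists k, w = k *: c.
Proof.
move=> rM c0 Mc Mw.
have ker_trM (u : 'cV_n.+1) : M *m u = 0 -> (u^T <= kermx M^T)%MS.
  by move=> Mu; apply/sub_kermxP; rewrite -trmx_mul Mu trmx0.
have rk : \rank (kermx M^T) = 1%N by rewrite mxrank_ker mxrank_tr rM subSnn.
have /eqmxP c_ker : (c^T == kermx M^T)%MS.
  by rewrite -(mxrank_leqif_eq (ker_trM c Mc)).2 rk rank_rV trmx_eq0 c0.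
have /sub_rVP [k wk] : (w^T <= c^T)%MS by rewrite c_ker ker_trM.
by exists k; rewrite -[w]trmxK wk linearZ /= trmxK.
Qed.

Lemma separating_row n (X c : 'cV[K]_n.+1) :
  X != 0 -> (forall k, c != k *: X) -> exists2 s : 'rV_n.+1, s *m X = 0 & s *m c != 0.
Proof.
move=> X0 c_notin_X; set S := kermx X.
have SX : S *m X = 0 by apply: mulmx_ker.
have [Sc0 | /cV0Pn [i Sci]] := eqVneq (S *m c) 0.
  have rS : \rank S = n by rewrite mxrank_ker -mxrank_tr rank_rV trmx_eq0 X0 subn1.
  by have [k ck] := corank1_ker rS X0 SX Sc0; case/eqP: (c_notin_X k).
exists (row i S); first by rewrite -row_mul SX row0.
by apply/cV0Pn; exists 0; rewrite -row_mul mxE.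
Qed.

Lemma mxrank_row_mx_pivot n (X v : 'cV[K]_n) j :
  X j 0 != 0 -> v j 0 = 0 -> v != 0 -> \rank (row_mx X v) = 2%N.
Proof.
move=> Xj vj v0; apply/eqP; change (row_full (row_mx X v)); apply/row_full_ker => a.
rewrite -[a](@vsubmxK _ 1 1) [usubmx a]mx11_scalar [dsubmx a]mx11_scalar.
move: (usubmx a 0 0) (dsubmx a 0 0) => a1 a2; rewrite (mul_row_col X v) !mul_mx_scalar.
move=> Xv0; have /eqP : (a1 *: X + a2 *: v) j 0 = 0 by rewrite Xv0 mxE.
rewrite !mxE vj mulr0 addr0 mulf_eq0 (negbTE Xj) orbF => /eqP a1_0.
move: Xv0; rewrite a1_0 scale0r add0r => /eqP; rewrite scaler_eq0 (negbTE v0) orbF.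
by move=> /eqP ->; rewrite !raddf0 col_mx0.
Qed.

End KernelRank.

Local Notation i0 := (@Ordinal 3 0 isT).
Local Notation i1 := (@Ordinal 3 1 isT).
Local Notation i2 := (@Ordinal 3 2 isT).

Lemma ord3P (i : 'I_3) : [\/ i = i0, i = i1 | i = i2].
Proof.
by case: i => -[|[|[|//]]] lti; [apply: Or31 | apply: Or32 | apply: Or33]; apply: val_inj.
Qed.

Lemma sum_ord3 (V : nmodType) (f : 'I_3 -> V) : \sum_i f i = f i0 + f i1 + f i2.
Proof.
rewrite !big_ord_recl big_ord0 addr0 addrA.
by congr (f _ + f _ + f _); apply: val_inj.
Qed.

Definition crossmx (R : pzRingType) (y : 'cV[R]_3) : 'M[R]_3 :=
  \matrix_(i, j) match nat_of_ord i, nat_of_ord j with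
    | 0, 1 => - y i2 0 | 0, 2 => y i1 0
    | 1, 0 => y i2 0   | 1, 2 => - y i0 0
    | 2, 0 => - y i1 0 | 2, 1 => y i0 0
    | _, _ => 0 end.

Lemma map_crossmx (R S : pzRingType) (f : {rmorphism R -> S}) (y : 'cV[R]_3) :
  map_mx f (crossmx y) = crossmx (map_mx f y).
Proof.
apply/matrixP => i j; rewrite !mxE.
by case: (ord3P i) => ->; case: (ord3P j) => -> /=; rewrite ?mxE ?rmorphN ?rmorph0.
Qed.

Section CrossProduct.
Variable R : comPzRingType.
Implicit Types y w : 'cV[R]_3.

Lemma crossmx0 : crossmx (0 : 'cV[R]_3) = 0.
Proof.
apply/matrixP => i j; rewrite !mxE.
by case: (ord3P i) => ->; case: (ord3P j) => -> /=; rewrite ?mxE ?oppr0.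
Qed.

Lemma crossmx_mul_self y : crossmx y *m y = 0.
Proof.
apply/matrixP => i j; rewrite ord1 !mxE sum_ord3 !mxE.
by case: (ord3P i) => -> /=; ring.
Qed.

Lemma crossmx_crossmx_mul y w : crossmx (crossmx y *m w) = w *m y^T - y *m w^T.
Proof.
apply/matrixP => i j; rewrite !mxE !big_ord1 !mxE.
by case: (ord3P i) => ->; case: (ord3P j) => -> /=; rewrite ?mxE ?sum_ord3 ?mxE /=; ring.
Qed.

End CrossProduct.

(* Padded with zero rows to the shape of [crossmx y]. *)
Definition linemx (R : pzRingType) (y : 'cV[R]_3) : 'M[R]_(1 + 2, 3) := col_mx y^T 0.

Lemma linemx_mul_eq0 (R : pzRingType) (y : 'cV[R]_3) p (M : 'M[R]_(3, p)) :
  linemx y *m M = 0 <-> y^T *m M = 0.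
Proof.
rewrite /linemx mul_col_mx mul0mx.
by split => [/eqP | ->]; rewrite ?col_mx0 // col_mx_eq0 eqxx andbT => /eqP.
Qed.

Lemma map_linemx (R S : pzRingType) (f : {rmorphism R -> S}) (y : 'cV[R]_3) :
  map_mx f (linemx y) = linemx (map_mx f y).
Proof. by rewrite /linemx map_col_mx map_trmx raddf0. Qed.

Definition incidence_mx (R : pzRingType) (f : factor_kind) (y : 'cV[R]_3) : 'M[R]_3 :=
  match f with Pt => crossmx y | Ln => linemx y end.

Definition corr_mx (R : pzRingType) (t : corr_type) (A B C : 'M[R]_(3, 4))
    (y1 y2 y3 : 'cV[R]_3) : 'M[R]_(3 + (3 + 3), 4) :=
  let: (f1, f2, f3) := kinds t in
  col_mx (incidence_mx f1 y1 *m A)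
         (col_mx (incidence_mx f2 y2 *m B) (incidence_mx f3 y3 *m C)).

Lemma map_corr_mx (R S : pzRingType) (f : {rmorphism R -> S}) t A B C y1 y2 y3 :
  map_mx f (corr_mx t A B C y1 y2 y3) =
  corr_mx t (map_mx f A) (map_mx f B) (map_mx f C)
            (map_mx f y1) (map_mx f y2) (map_mx f y3).
Proof.
have map_incidence g (y : 'cV[R]_3) :
    map_mx f (incidence_mx g y) = incidence_mx g (map_mx f y).
  by case: g; [apply: map_crossmx | apply: map_linemx].
by rewrite /corr_mx; case: kinds => -[f1 f2 f3]; rewrite !map_col_mx !map_mxM !map_incidence.
Qed.

Lemma corr_mx_mul_eq0 (R : pzRingType) t A B C y1 y2 y3 p (M : 'M[R]_(4, p)) :
  corr_mx t A B C y1 y2 y3 *m M = 0 <->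
  let: (f1, f2, f3) := kinds t in
  [/\ incidence_mx f1 y1 *m (A *m M) = 0, incidence_mx f2 y2 *m (B *m M) = 0
    & incidence_mx f3 y3 *m (C *m M) = 0].
Proof.
rewrite /corr_mx; case: kinds => -[f1 f2 f3]; rewrite !mul_col_mx -!mulmxA.
split => [/eqP | [-> -> ->]]; last by rewrite !col_mx0.
by rewrite !col_mx_eq0 => /and3P [/eqP-> /eqP-> /eqP->].
Qed.

Section Incidence.
Variable K : fieldType.

Lemma pt_eq_sym n (a b : 'cV[K]_n) : pt_eq a b -> pt_eq b a.
Proof.
case=> k [k0 ->]; exists k^-1; split; first by rewrite invr_eq0.
by rewrite scalerA mulVf // scale1r.
Qed.

Lemma outer_sym_scale n (y w : 'cV[K]_n) :
  y != 0 -> w *m y^T = y *m w^T -> exists k, w = k *: y.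
Proof.
case/cV0Pn => p yp wy; exists (w p 0 / y p 0); apply/matrixP => i j.
have := congr1 (fun M : 'M_n => M i p) wy; rewrite ord1 !mxE !big_ord1 !mxE => e.
by apply: (mulIf yp); rewrite e; field.
Qed.

Lemma crossmx_ker (y w : 'cV[K]_3) :
  y != 0 -> crossmx y *m w = 0 -> exists k, w = k *: y.
Proof.
move=> y0 yw; apply: outer_sym_scale y0 _; apply/eqP.
by rewrite -subr_eq0 -crossmx_crossmx_mul yw crossmx0.
Qed.

Lemma crossmx_pt_eq (y w : 'cV[K]_3) :
  y != 0 -> w != 0 -> crossmx y *m w = 0 -> pt_eq w y.
Proof.
move=> y0 w0 /(crossmx_ker y0) [k wk]; exists k; split=> //.
by apply: contra_neq w0 => k0; rewrite wk k0 scale0r.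
Qed.

Lemma pt_eq_crossmx (y w : 'cV[K]_3) : pt_eq w y -> crossmx y *m w = 0.
Proof. by case=> k [_ ->]; rewrite -scalemxAr crossmx_mul_self scaler0. Qed.

Lemma avoids_incidence f (y e : 'cV[K]_3) :
  y != 0 -> e != 0 -> avoids f y e -> incidence_mx f y *m e != 0.
Proof.
case: f => /= y0 e0 ye; apply/eqP.
  by move/(crossmx_pt_eq y0 e0)/pt_eq_sym.
by move/linemx_mul_eq0 => yTe; rewrite yTe eqxx in ye.
Qed.

Lemma avoids_not_scale f y (Q : 'M[K]_(3, 4)) (X c : 'cV[K]_4) :
  y != 0 -> Q *m c != 0 -> avoids f y (Q *m c) ->
  incidence_mx f y *m (Q *m X) = 0 -> forall k, c != k *: X.
Proof.
move=> y0 Qc0 /(avoids_incidence y0 Qc0) yQc yQX k; apply: contraNneq yQc => ->.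
by rewrite -!scalemxAr yQX scaler0.
Qed.

Lemma maps_to_incidence f (P : 'M[K]_(3, 4)) X L (y : 'cV[K]_3) :
  on_line L X -> maps_to f P X L y -> incidence_mx f y *m (P *m X) = 0.
Proof.
case: f => /= [_ [_ Xy] | [v ->] [_ [_ yL]]]; first exact: pt_eq_crossmx.
by apply/linemx_mul_eq0; rewrite !mulmxA -(mulmxA y^T) yL mul0mx.
Qed.

Lemma consistent_ker t (A B C : 'M[K]_(3, 4)) (y1 y2 y3 : 'cV[K]_3) :
  consistent t A B C y1 y2 y3 ->
  exists2 X : 'cV_4, X != 0 & corr_mx t A B C y1 y2 y3 *m X = 0.
Proof.
have := @corr_mx_mul_eq0 _ t A B C y1 y2 y3 1.
rewrite /consistent; case: kinds => -[f1 f2 f3] ker [X [L [[X0 _ XL] [m1 m2 m3]]]].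
by exists X => //; apply/ker; split; apply: maps_to_incidence XL _.
Qed.

(* The kernel contains the column space of [L], which meets every plane [w]. *)
Lemma consistent_LLL_ker (A B C : 'M[K]_(3, 4)) (y1 y2 y3 : 'cV[K]_3) (w : 'rV_4) :
  consistent LLL A B C y1 y2 y3 ->
  exists2 v : 'cV_4, v != 0 & col_mx (corr_mx LLL A B C y1 y2 y3) w *m v = 0.
Proof.
case=> X [L [[_ rL _] [[_ [_ y1L]] [_ [_ y2L]] [_ [_ y3L]]]]].
have NL : corr_mx LLL A B C y1 y2 y3 *m L = 0.
  by apply/corr_mx_mul_eq0; split; apply/linemx_mul_eq0.
have [a a0 wLa] : exists2 a : 'cV_2, a != 0 & w *m L *m a = 0.
  by apply/mxrank_ltP; apply: leq_ltn_trans (rank_leq_row _) _.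
exists (L *m a); last by rewrite mul_col_mx !mulmxA NL mul0mx wLa col_mx0.
have /row_full_ker L_inj : row_full L by rewrite /row_full rL.
by apply: contra a0 => /eqP /L_inj ->.
Qed.

End Incidence.

Section ZariskiClosure.
Variable K : fieldType.
Local Notation MP := {mpoly K[9]}.

Lemma map_mx_mevalC (v : 'I_9 -> K) m n (M : 'M[K]_(m, n)) :
  map_mx (meval v) (map_mx (@mpolyC 9 K) M) = M.
Proof. by apply/matrixP => i j; rewrite !mxE; apply: mevalC. Qed.

(* Rank deficiency is cut out by the maximal minors, which are polynomials. *)
Lemma multiview_rank_lt t A B C (x1 x2 x3 : 'cV[K]_3) m n (M : 'M[MP]_(m, n)) :
  multiview_variety t A B C x1 x2 x3 ->
  (forall y1 y2 y3, consistent t A B C y1 y2 y3 ->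
     (\rank (map_mx (meval (coords y1 y2 y3)) M) < n)%N) ->
  (\rank (map_mx (meval (coords x1 x2 x3)) M) < n)%N.
Proof.
move=> [_ closed] rk_cons; apply/mxrank_lt_det => Q.
have minorE y1 y2 y3 : (\det (map_mx (@mpolyC 9 K) Q *m M)).@[coords y1 y2 y3] =
                       \det (Q *m map_mx (meval (coords y1 y2 y3)) M).
  by rewrite -det_map_mx map_mxM; congr (\det (_ *m _)); apply: map_mx_mevalC.
rewrite -minorE; apply: closed => y1 y2 y3 /rk_cons.
by rewrite minorE => /mxrank_lt_det.
Qed.

Definition generic_pt (k : nat) : 'cV[MP]_3 := \col_(j < 3) 'X_(inord (3 * k + j)).

Lemma eval_generic_pt (y1 y2 y3 : 'cV[K]_3) :
  [/\ map_mx (meval (coords y1 y2 y3)) (generic_pt 0) = y1,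
      map_mx (meval (coords y1 y2 y3)) (generic_pt 1) = y2
    & map_mx (meval (coords y1 y2 y3)) (generic_pt 2) = y3].
Proof.
have coordE k (j : 'I_3) : (k < 3)%N -> coords y1 y2 y3 (inord (3 * k + j)) =
    (if k == 0%N then y1 else if k == 1%N then y2 else y3) j 0.
  move=> lt_k3; have lt_j3 := ltn_ord j; rewrite /coords inordK; last by lia.
  have -> : inord ((3 * k + j) %% 3) = j by apply: val_inj; rewrite /= inordK; lia.
  have -> : (3 * k + j < 3)%N = (k == 0%N) by lia.
  have -> : (3 * k + j < 6)%N = (k <= 1)%N by lia.
  by case: k lt_k3 => [|[|[|]]].
by split; apply/matrixP => j i; rewrite ord1 !mxE /= mevalXU coordE.
Qed.

Definition generic_corr_mx t (A B C : 'M[K]_(3, 4)) : 'M[MP]_(3 + (3 + 3), 4) :=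
  corr_mx t (map_mx (@mpolyC 9 K) A) (map_mx (@mpolyC 9 K) B) (map_mx (@mpolyC 9 K) C)
    (generic_pt 0) (generic_pt 1) (generic_pt 2).

Lemma eval_generic_corr_mx t A B C (y1 y2 y3 : 'cV[K]_3) :
  map_mx (meval (coords y1 y2 y3)) (generic_corr_mx t A B C) = corr_mx t A B C y1 y2 y3.
Proof.
by rewrite map_corr_mx !map_mx_mevalC; case: (eval_generic_pt y1 y2 y3) => -> -> ->.
Qed.

Lemma multiview_ker t A B C (x1 x2 x3 : 'cV[K]_3) :
  multiview_variety t A B C x1 x2 x3 ->
  exists2 X : 'cV_4, X != 0 & corr_mx t A B C x1 x2 x3 *m X = 0.
Proof.
move=> MV; apply/mxrank_ltP; rewrite -eval_generic_corr_mx.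
apply: multiview_rank_lt MV _ => y1 y2 y3 /consistent_ker ker.
by rewrite eval_generic_corr_mx; apply/mxrank_ltP.
Qed.

Lemma multiview_LLL_rank A B C (x1 x2 x3 : 'cV[K]_3) :
  multiview_variety LLL A B C x1 x2 x3 ->
  forall w : 'rV_4, (\rank (col_mx (corr_mx LLL A B C x1 x2 x3) w) < 4)%N.
Proof.
move=> MV w.
pose M := col_mx (generic_corr_mx LLL A B C) (map_mx (@mpolyC 9 K) w).
have evalM y1 y2 y3 :
    map_mx (meval (coords y1 y2 y3)) M = col_mx (corr_mx LLL A B C y1 y2 y3) w.
  by rewrite map_col_mx eval_generic_corr_mx map_mx_mevalC.
rewrite -evalM; apply: multiview_rank_lt MV _ => y1 y2 y3 cons.
by rewrite evalM; apply/mxrank_ltP; apply: consistent_LLL_ker.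
Qed.

End ZariskiClosure.

Section Cameras.
Variable K : fieldType.
Implicit Types (P Q : 'M[K]_(3, 4)) (X c : 'cV[K]_4) (L : 'M[K]_(4, 2)).

Lemma epipole_neq0 P Q cP cQ :
  \rank Q = 3%N -> is_center P cP -> is_center Q cQ -> ~ pt_eq cP cQ -> Q *m cP != 0.
Proof.
move=> rQ [cP0 _] [cQ0 QcQ] ne_cPcQ; apply/eqP => /(corank1_ker rQ cQ0 QcQ) [k cPk].
apply: ne_cPcQ; exists k; split=> //.
by apply: contra_neq cP0 => k0; rewrite cPk k0 scale0r.
Qed.

Lemma camera_mul_neq0 P c X :
  \rank P = 3%N -> is_center P c -> X != 0 -> (forall k, c != k *: X) -> P *m X != 0.
Proof.
move=> rP [c0 Pc] X0 c_notin_X; apply/eqP => /(corank1_ker rP c0 Pc) [k Xk].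
have k0 : k != 0 by apply: contra_neq X0 => k0; rewrite Xk k0 scale0r.
by move/eqP: (c_notin_X k^-1); apply; rewrite Xk scalerA mulVf // scale1r.
Qed.

Lemma img_pt_crossmx P X (z : 'cV[K]_3) :
  z != 0 -> P *m X != 0 -> crossmx z *m (P *m X) = 0 -> img_pt P X z.
Proof. by move=> z0 PX0 zPX; split; last exact: crossmx_pt_eq. Qed.

(* [P] is injective on [L] because the plane [h] through [L] misses the center. *)
Lemma img_line_plane P c L (y : 'cV[K]_3) (h : 'rV_4) :
  \rank P = 3%N -> is_center P c -> \rank L = 2%N -> y != 0 ->
  y^T *m P *m L = 0 -> h *m L = 0 -> h *m c != 0 -> img_line P L y.
Proof.
move=> rP [c0 Pc] rL y0 yPL hL hc; split; last by rewrite mulmxA.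
apply/eqP; change (row_full (P *m L)); apply/row_full_ker => a PLa.
have [k Lak] : exists k, L *m a = k *: c by apply: corank1_ker rP c0 Pc _; rewrite mulmxA.
have /eqP : h *m (L *m a) = 0 by rewrite mulmxA hL mul0mx.
rewrite Lak -scalemxAr scaler_eq0 (negbTE hc) orbF => /eqP k0.
have /row_full_ker L_inj : row_full L by rewrite /row_full rL.
by apply: L_inj; rewrite Lak k0 scale0r.
Qed.

(* Complete [X] by a kernel vector [v] of [F] with [v j = 0] where [X j != 0]. *)
Lemma line_through k (F : 'M[K]_(k, 4)) X :
  X != 0 -> F *m X = 0 ->
  (forall j : 'I_4, (\rank (col_mx F (delta_mx (ord0 : 'I_1) j)) < 4)%N) ->
  exists L, [/\ \rank L = 2%N, on_line L X & F *m L = 0].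
Proof.
move=> X0 FX rkF; have /cV0Pn [j Xj] := X0.
have [v v0] := mxrank_ltP _ (rkF j); rewrite mul_col_mx => /eqP.
rewrite col_mx_eq0 => /andP [/eqP Fv /eqP]; rewrite -rowE => /matrixP /(_ 0 0).
rewrite !mxE => vj; exists (row_mx X v); split.
- exact: mxrank_row_mx_pivot Xj vj v0.
- by exists (col_mx 1 0 : 'cV_(1 + 1)); rewrite (mul_row_col X v) mulmx1 mulmx0 addr0.
- by rewrite (mul_mx_row F X v) FX Fv row_mx0.
Qed.

Lemma line_in_planes X (h1 h2 : 'rV[K]_4) :
  X != 0 -> h1 *m X = 0 -> h2 *m X = 0 ->
  exists L, [/\ \rank L = 2%N, on_line L X, h1 *m L = 0 & h2 *m L = 0].
Proof.
move=> X0 h1X h2X; have FX : col_mx h1 h2 *m X = 0 by rewrite mul_col_mx h1X h2X col_mx0.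
have [|L [rL XL]] := line_through X0 FX => [j | ]; first exact: leq_ltn_trans (rank_leq_row _) _.
by rewrite mul_col_mx => /eqP; rewrite col_mx_eq0 => /andP [/eqP h1L /eqP h2L]; exists L.
Qed.

End Cameras.

Section Consistency.
Variables (K : fieldType) (A B C : 'M[K]_(3, 4)) (cA cB cC : 'cV[K]_4).
Variables x1 x2 x3 : 'cV[K]_3.
Hypotheses (rA : \rank A = 3%N) (rB : \rank B = 3%N) (rC : \rank C = 3%N).
Hypotheses (hA : is_center A cA) (hB : is_center B cB) (hC : is_center C cC).
Hypotheses (dAB : ~ pt_eq cA cB) (dAC : ~ pt_eq cA cC) (dBC : ~ pt_eq cB cC).
Hypotheses (x1_neq0 : x1 != 0) (x2_neq0 : x2 != 0) (x3_neq0 : x3 != 0).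

Let eAB : A *m cB != 0 := epipole_neq0 rA hB hA (fun e => dAB (pt_eq_sym e)).
Let eAC : A *m cC != 0 := epipole_neq0 rA hC hA (fun e => dAC (pt_eq_sym e)).
Let eBA : B *m cA != 0 := epipole_neq0 rB hA hB dAB.
Let eBC : B *m cC != 0 := epipole_neq0 rB hC hB (fun e => dBC (pt_eq_sym e)).

Let line_plane (y : 'cV[K]_3) (P : 'M[K]_(3, 4)) p (M : 'M[K]_(4, p)) :
  linemx y *m (P *m M) = 0 -> y^T *m P *m M = 0.
Proof. by rewrite -mulmxA => /linemx_mul_eq0. Qed.

Lemma consistent_PLL (X : 'cV_4) :
  avoids_epipoles PLL A B C cA cB cC x1 x2 x3 -> X != 0 ->
  corr_mx PLL A B C x1 x2 x3 *m X = 0 -> consistent PLL A B C x1 x2 x3.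
Proof.
move=> [_ [a21 a23] [_ a32]] X0 /corr_mx_mul_eq0 [x1X x2X x3X].
have AX := camera_mul_neq0 rA hA X0 (avoids_not_scale x2_neq0 eBA a21 x2X).
have [L [rL XL x2L x3L]] := line_in_planes X0 (line_plane x2X) (line_plane x3X).
exists X, L; split=> //; split; first exact: img_pt_crossmx.
  by apply: img_line_plane rB hB rL x2_neq0 x2L x3L _; rewrite -mulmxA.
by apply: img_line_plane rC hC rL x3_neq0 x3L x2L _; rewrite -mulmxA.
Qed.

Lemma consistent_LLL (X : 'cV_4) :
  avoids_epipoles LLL A B C cA cB cC x1 x2 x3 -> X != 0 ->
  corr_mx LLL A B C x1 x2 x3 *m X = 0 ->
  (forall w : 'rV_4, \rank (col_mx (corr_mx LLL A B C x1 x2 x3) w) < 4)%N ->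
  consistent LLL A B C x1 x2 x3.
Proof.
move=> [[a12 a13] [a21 _] _] X0 NX rkN.
have [L [rL XL /corr_mx_mul_eq0 [x1L x2L x3L]]] := line_through X0 NX (fun j => rkN _).
exists X, L; split=> //; split.
- by apply: img_line_plane rA hA rL x1_neq0 (line_plane x1L) (line_plane x2L) _; rewrite -mulmxA.
- by apply: img_line_plane rB hB rL x2_neq0 (line_plane x2L) (line_plane x1L) _; rewrite -mulmxA.
- by apply: img_line_plane rC hC rL x3_neq0 (line_plane x3L) (line_plane x1L) _; rewrite -mulmxA.
Qed.

Lemma consistent_PPL (X : 'cV_4) :
  avoids_epipoles PPL A B C cA cB cC x1 x2 x3 -> X != 0 ->
  corr_mx PPL A B C x1 x2 x3 *m X = 0 -> consistent PPL A B C x1 x2 x3.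
Proof.
move=> [[a12 a13] [a21 _] _] X0 /corr_mx_mul_eq0 [x1X x2X x3X].
have AX := camera_mul_neq0 rA hA X0 (avoids_not_scale x2_neq0 eBA a21 x2X).
have BX := camera_mul_neq0 rB hB X0 (avoids_not_scale x1_neq0 eAB a12 x1X).
have [s sX scC] := separating_row X0 (avoids_not_scale x1_neq0 eAC a13 x1X).
have [L [rL XL x3L sL]] := line_in_planes X0 (line_plane x3X) sX.
exists X, L; split=> //; split; [exact: img_pt_crossmx | exact: img_pt_crossmx |].
exact: img_line_plane rC hC rL x3_neq0 x3L sL scC.
Qed.

Lemma consistent_PLP (X : 'cV_4) :
  avoids_epipoles PLP A B C cA cB cC x1 x2 x3 -> X != 0 ->
  corr_mx PLP A B C x1 x2 x3 *m X = 0 -> consistent PLP A B C x1 x2 x3.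
Proof.
move=> [[a12 _] [a21 a23] _] X0 /corr_mx_mul_eq0 [x1X x2X x3X].
have AX := camera_mul_neq0 rA hA X0 (avoids_not_scale x2_neq0 eBA a21 x2X).
have CX := camera_mul_neq0 rC hC X0 (avoids_not_scale x2_neq0 eBC a23 x2X).
have [s sX scB] := separating_row X0 (avoids_not_scale x1_neq0 eAB a12 x1X).
have [L [rL XL x2L sL]] := line_in_planes X0 (line_plane x2X) sX.
exists X, L; split=> //; split; [exact: img_pt_crossmx | | exact: img_pt_crossmx].
exact: img_line_plane rB hB rL x2_neq0 x2L sL scB.
Qed.

Lemma consistent_PPP (X : 'cV_4) :
  avoids_epipoles PPP A B C cA cB cC x1 x2 x3 -> X != 0 ->
  corr_mx PPP A B C x1 x2 x3 *m X = 0 -> consistent PPP A B C x1 x2 x3.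
Proof.
move=> [[a12 a13] [a21 _] _] X0 /corr_mx_mul_eq0 [x1X x2X x3X].
have AX := camera_mul_neq0 rA hA X0 (avoids_not_scale x2_neq0 eBA a21 x2X).
have BX := camera_mul_neq0 rB hB X0 (avoids_not_scale x1_neq0 eAB a12 x1X).
have CX := camera_mul_neq0 rC hC X0 (avoids_not_scale x1_neq0 eAC a13 x1X).
have [L [rL XL _ _]] := line_in_planes X0 (mul0mx 1 X) (mul0mx 1 X).
by exists X, L; split=> //; split; exact: img_pt_crossmx.
Qed.

Lemma multiview_consistent t :
  avoids_epipoles t A B C cA cB cC x1 x2 x3 ->
  multiview_variety t A B C x1 x2 x3 -> consistent t A B C x1 x2 x3.
Proof.
move=> avoid MV; have [X X0 NX] := multiview_ker MV.
case: t avoid MV NX => avoid MV NX.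
- exact: consistent_PLL avoid X0 NX.
- exact: consistent_LLL avoid X0 NX (multiview_LLL_rank MV).
- exact: consistent_PPL avoid X0 NX.
- exact: consistent_PLP avoid X0 NX.
- exact: consistent_PPP avoid X0 NX.
Qed.

End Consistency.

Theorem lemma3p5 (R : realType) (t : corr_type)
    (A B C : 'M[R[i]]_(3,4)) (cA cB cC : 'cV[R[i]]_4)
    (x1 x2 x3 : 'cV[R[i]]_3) :
  \rank A = 3%N -> \rank B = 3%N -> \rank C = 3%N ->
  is_center A cA -> is_center B cB -> is_center C cC ->
  ~ pt_eq cA cB -> ~ pt_eq cA cC -> ~ pt_eq cB cC ->
  avoids_epipoles t A B C cA cB cC x1 x2 x3 ->
  multiview_variety t A B C x1 x2 x3 ->
  consistent t A B C x1 x2 x3.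
Proof.
move=> rA rB rC hA hB hC dAB dAC dBC avoid MV.
have [[x1_neq0 x2_neq0 x3_neq0] _] := MV.
exact: multiview_consistent avoid MV.
Qed.
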